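(* Let $\alpha,\beta,\gamma,\lambda,x$ be non-negative integers with $(\alpha,\beta,\gamma,x)\neq(0,0,0,0)$. Then for every integer $n\ge0$, $$T_{n+1}^{\lambda,x}(\alpha,\beta,\gamma)=\gamma\,T_n^{\lambda,x}(\alpha,\beta,\gamma-\alpha)+x\lambda\beta\,T_n^{\lambda+1,x}(\alpha,\beta,\gamma+\beta-\alpha).$$
   Context: For complex numbers $c,\alpha$ and an integer $n\ge 0$ let $(c|\alpha)_n=\prod_{i=0}^{n-1}(c-i\alpha)$, with $(c|\alpha)_0=1$. Let $E_{\alpha,c}(t)=\sum_{n\ge 0}(c|\alpha)_n\,t^n/n!$, viewed as a formal power series in $t$. It equals $(1+\alpha t)^{c/\alpha}$ if $\alpha\neq0$ and $e^{ct}$ if $\alpha=0$. For complex $\alpha,\beta,\gamma,x$ and a non-negative integer $\lambda$, the numbers $T_n^{\lambda,x}(\alpha,\beta,\gamma)$, $n\ge0$, are defined by the formal power series identity $$\sum_{n\ge0}T_n^{\lambda,x}(\alpha,\beta,\gamma)\frac{t^n}{n!}=E_{\alpha,\gamma}(t)\,\bigl(1-x(E_{\alpha,\beta}(t)-1)\bigr)^{-\lambda}.$$ The third argument may be any complex number. *)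

(* Formal power series over algC (algebraic complex numbers),
   represented by their coefficient sequences nat -> algC (ordinary coefficients). *)
From HB Require Import structures.
From mathcomp Require Import all_boot all_order all_algebra all_field.
Set Implicit Arguments. Unset Strict Implicit. Unset Printing Implicit Defensive.
Import Order.TTheory GRing.Theory Num.Theory.
Local Open Scope ring_scope.

Definition fps := nat -> algC.

Definition fall (c alpha : algC) (n : nat) : algC :=
  \prod_(i < n) (c - i%:R * alpha).

Definition E_ser (alpha c : algC) : fps := fun n => fall c alpha n / (n`!)%:R.

Definition fps_one : fps := fun n => if n is 0 then 1 else 0.
Definition fps_add (f g : fps) : fps := fun n => f n + g n.
Definition fps_scale (a : algC) (f : fps) : fps := fun n => a * f n.
Definition fps_mul (f g : fps) : fps :=
  fun n => \sum_(i < n.+1) f i * g (n - i)%N.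
Definition fps_pow (f : fps) (k : nat) : fps := iter k (fps_mul f) fps_one.

Fixpoint inv_coefs (f : fps) (n : nat) : seq algC :=
  match n with
  | 0 => [:: (f 0%N)^-1]
  | m.+1 => let s := inv_coefs f m in
            rcons s (- (f 0%N)^-1 *
                     \sum_(i < m.+1) f i.+1 * nth 0 s (m - i)%N)
  end.
Definition fps_inv (f : fps) : fps := fun n => nth 0 (inv_coefs f n) n.

Definition T (n lam : nat) (x alpha beta gamma : algC) : algC :=
  let base := fps_add fps_one
                (fps_scale (- x) (fps_add (E_ser alpha beta) (fps_scale (-1) fps_one))) in
  (n`!)%:R * fps_mul (E_ser alpha gamma) (fps_pow (fps_inv base) lam) n.

(* The recurrence for T_n^{lambda,x}(alpha,beta,gamma) is the coefficient form of a
   differential identity between exponential generating functions.  Write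
   E_c = E_{alpha,c} and P = (1 - x (E_beta - 1))^{-1}, so that the series of the
   T_n^{lambda,x}(alpha,beta,c) is F_{lambda,c} = E_c P^lambda.  Then
     (1)  E_c' = c E_{c-alpha}                     (termwise, from (c|alpha)_{n+1}),
     (2)  E_c E_d = E_{c+d}                        (both sides solve the ODE
                                                    (1 + alpha t) y' = (c+d) y, y(0) = 1),
     (3)  P' = x beta E_{beta-alpha} P^2           (differentiate P (1 - x(E_beta-1)) = 1),
   and the product rule gives
     F_{lambda,c}' = c F_{lambda,c-alpha} + x lambda beta F_{lambda+1,c+beta-alpha},
   whose coefficient of t^n is the claimed recurrence.  It holds for all complex
   parameters. *)

From HB Require Import structures.
From mathcomp Require Import all_boot all_order all_algebra all_field.
From mathcomp Require Import ring.
From Stdlib Require Import Setoid Morphisms.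
Import Order.TTheory GRing.Theory Num.Theory.
Local Open Scope ring_scope.

Definition eqmodX {R : nzRingType} (N : nat) (p q : {poly R}) : Prop :=
  forall i, (i < N)%N -> p`_i = q`_i.

#[export] Instance eqmodX_Equivalence {R : nzRingType} N :
  Equivalence (@eqmodX R N).
Proof.
split; first by move=> p.
  by move=> p q pq i /pq ->.
by move=> p q r pq qr i lt_iN; rewrite pq ?qr.
Qed.

#[export] Instance eqmodX_add {R : nzRingType} N :
  Proper (eqmodX N ==> eqmodX N ==> eqmodX N) (+%R : {poly R} -> _ -> _).
Proof. by move=> p p' pp' q q' qq' i lt_iN; rewrite !coefD pp' ?qq'. Qed.

#[export] Instance eqmodX_opp {R : nzRingType} N :
  Proper (eqmodX N ==> eqmodX N) (-%R : {poly R} -> _).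
Proof. by move=> p q pq i lt_iN; rewrite !coefN pq. Qed.

#[export] Instance eqmodX_natmul {R : nzRingType} N :
  Proper (eqmodX N ==> eq ==> eqmodX N) (@GRing.natmul {poly R}).
Proof. by move=> p q pq k _ <- i lt_iN; rewrite !coefMn pq. Qed.

(* Only coefficients of degree <= i enter the coefficient of degree i of a product. *)
#[export] Instance eqmodX_mul {R : nzRingType} N :
  Proper (eqmodX N ==> eqmodX N ==> eqmodX N) ( *%R : {poly R} -> _ -> _).
Proof.
move=> p p' pp' q q' qq' i lt_iN; rewrite !coefM; apply: eq_bigr => j _.
have le_ji : (j <= i)%N by rewrite -ltnS.
by rewrite pp' ?qq' //; apply: leq_ltn_trans lt_iN; rewrite ?leq_subr.
Qed.

(* Differentiation shifts coefficients down, so it loses one order of precision. *)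
#[export] Instance eqmodX_deriv {R : nzRingType} N :
  Proper (eqmodX N.+1 ==> eqmodX N) (@deriv R).
Proof. by move=> p q pq i lt_iN; rewrite !coef_deriv pq. Qed.

Lemma eqmodX_le {R : nzRingType} {M N : nat} {p q : {poly R}} :
  (M <= N)%N -> eqmodX N p q -> eqmodX M p q.
Proof. by move=> le_MN pq i lt_iM; apply: pq; apply: leq_trans le_MN. Qed.

Lemma eqmodX_eq {R : nzRingType} N (p q : {poly R}) : p = q -> eqmodX N p q.
Proof. by move=> ->. Qed.

Definition trunc (N : nat) (f : fps) : {poly algC} := \poly_(i < N) f i.

Lemma coef_trunc N f i : (i < N)%N -> (trunc N f)`_i = f i.
Proof. by move=> lt_iN; rewrite coef_poly lt_iN. Qed.

Lemma trunc_ext N {f g : fps} : f =1 g -> trunc N f = trunc N g.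
Proof. by move=> fg; apply: eq_poly => i _; apply: fg. Qed.

Lemma trunc_one N : eqmodX N (trunc N fps_one) 1.
Proof. by move=> [|i] lt_iN; rewrite coef_trunc // coef1. Qed.

Lemma trunc_add N f g : eqmodX N (trunc N (fps_add f g)) (trunc N f + trunc N g).
Proof. by move=> i lt_iN; rewrite coefD !coef_trunc. Qed.

Lemma trunc_scale N a f : eqmodX N (trunc N (fps_scale a f)) (a%:P * trunc N f).
Proof. by move=> i lt_iN; rewrite coefCM !coef_trunc. Qed.

Lemma trunc_mul N f g : eqmodX N (trunc N (fps_mul f g)) (trunc N f * trunc N g).
Proof.
move=> i lt_iN; rewrite coef_trunc // coefM; apply: eq_bigr => j _.
have le_ji : (j <= i)%N by rewrite -ltnS.
by rewrite !coef_trunc //; apply: leq_ltn_trans lt_iN; rewrite ?leq_subr.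
Qed.

Lemma trunc_pow N f k : eqmodX N (trunc N (fps_pow f k)) (trunc N f ^+ k).
Proof.
elim: k => [|k IHk]; first exact: trunc_one.
by rewrite exprS /fps_pow iterS trunc_mul -/(fps_pow f k) IHk.
Qed.

(* fps_inv f is a right inverse of f when the constant term of f is invertible;
   the recursion of inv_coefs is exactly the coefficient equation of f * g = 1. *)
Lemma size_inv_coefs f n : size (inv_coefs f n) = n.+1.
Proof. by elim: n => [|n IHn] //=; rewrite size_rcons IHn. Qed.

Lemma nth_inv_coefs f n i : (i <= n)%N -> nth 0 (inv_coefs f n) i = fps_inv f i.
Proof.
elim: n => [|n IHn]; first by rewrite leqn0 => /eqP ->.
rewrite leq_eqVlt => /orP [/eqP -> //| lt_in].
by rewrite /= nth_rcons size_inv_coefs lt_in IHn.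
Qed.

Lemma fps_invS f m : fps_inv f m.+1 =
  - (f 0%N)^-1 * \sum_(i < m.+1) f i.+1 * fps_inv f (m - i)%N.
Proof.
rewrite {1}/fps_inv /= nth_rcons size_inv_coefs ltnn eqxx; congr (_ * _).
by apply: eq_bigr => i _; rewrite nth_inv_coefs // leq_subr.
Qed.

Lemma fps_mulV f : f 0%N != 0 -> fps_mul f (fps_inv f) =1 fps_one.
Proof.
move=> f0_neq0 [|m]; first by rewrite /fps_mul big_ord1 /fps_inv /= mulfV.
rewrite /fps_mul big_ord_recl subn0 fps_invS mulrA mulrN mulfV //.
by rewrite mulN1r addNr.
Qed.

Lemma fallSl c a i : fall c a i.+1 = c * fall (c - a) a i.
Proof.
rewrite /fall big_ord_recl /= mul0r subr0; congr (_ * _).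
by apply: eq_bigr => j _; rewrite /bump /= mulrSr; ring.
Qed.

Lemma fallSr c a i : fall c a i.+1 = fall c a i * (c - i%:R * a).
Proof. by rewrite /fall big_ord_recr. Qed.

Lemma E_ser0 a c : E_ser a c 0 = 1.
Proof. by rewrite /E_ser /fall big_ord0 divr1. Qed.

Lemma E_serSl a c i : E_ser a c i.+1 *+ i.+1 = c * E_ser a (c - a) i.
Proof.
have fact_neq0 : (i`!)%:R != 0 :> algC by rewrite pnatr_eq0 -lt0n fact_gt0.
rewrite /E_ser fallSl factS natrM -mulr_natr.
by field; rewrite fact_neq0 nat1r pnatr_eq0.
Qed.

Lemma E_serSr a c i : E_ser a c i.+1 *+ i.+1 = (c - i%:R * a) * E_ser a c i.
Proof.
have fact_neq0 : (i`!)%:R != 0 :> algC by rewrite pnatr_eq0 -lt0n fact_gt0.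
rewrite /E_ser fallSr factS natrM -mulr_natr.
by field; rewrite fact_neq0 nat1r pnatr_eq0.
Qed.

Lemma ode_coefP {R : comNzRingType} N (a c : R) (r : {poly R}) :
  eqmodX N ((1 + a%:P * 'X) * r^`()) (c%:P * r) <->
  (forall i, (i < N)%N -> r`_i.+1 *+ i.+1 = (c - i%:R * a) * r`_i).
Proof.
have coef_lhs i : ((1 + a%:P * 'X) * r^`())`_i = r`_i.+1 *+ i.+1 + i%:R * a * r`_i.
  rewrite mulrDl mul1r coefD -mulrA coefCM coefXM !coef_deriv.
  by case: i => [|i] /=; rewrite ?mulr0 ?mul0r ?addr0 //; ring.
split=> [ode i /ode | rec i /rec]; rewrite coef_lhs coefCM mulrBl.
  by move=> <-; rewrite addrK.
by move=> ->; rewrite subrK.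
Qed.

Lemma ode_mul {R : comNzRingType} N (a c d : R) (r s : {poly R}) :
  eqmodX N ((1 + a%:P * 'X) * r^`()) (c%:P * r) ->
  eqmodX N ((1 + a%:P * 'X) * s^`()) (d%:P * s) ->
  eqmodX N ((1 + a%:P * 'X) * (r * s)^`()) ((c + d)%:P * (r * s)).
Proof.
move=> ode_r ode_s; rewrite derivM.
have -> : (1 + a%:P * 'X) * (r^`() * s + r * s^`()) =
  (1 + a%:P * 'X) * r^`() * s + r * ((1 + a%:P * 'X) * s^`()) by ring.
by rewrite ode_r ode_s polyCD; apply: eqmodX_eq; ring.
Qed.

(* Solutions of the ODE are determined by their constant term (characteristic 0). *)
Lemma ode_uniq {R : numDomainType} N (a c : R) (r s : {poly R}) : r`_0 = s`_0 ->
  eqmodX N ((1 + a%:P * 'X) * r^`()) (c%:P * r) ->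
  eqmodX N ((1 + a%:P * 'X) * s^`()) (c%:P * s) -> eqmodX N.+1 r s.
Proof.
move=> rs0 /ode_coefP rec_r /ode_coefP rec_s; elim=> [//|i IHi] lt_iN.
apply/eqP; rewrite -(eqr_pMn2r (ltn0Sn i)) rec_r // rec_s // IHi //.
exact: ltnW.
Qed.

Definition E_poly N a c : {poly algC} := trunc N (E_ser a c).

Lemma E_poly_deriv N a c : eqmodX N (E_poly N.+1 a c)^`() (c%:P * E_poly N.+1 a (c - a)).
Proof.
move=> i lt_iN; rewrite coef_deriv coefCM !coef_trunc ?ltnS ?(ltnW lt_iN) //.
exact: E_serSl.
Qed.

Lemma E_poly_ode N a c : eqmodX N ((1 + a%:P * 'X) * (E_poly N.+1 a c)^`()) (c%:P * E_poly N.+1 a c).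
Proof.
apply/ode_coefP => i lt_iN.
by rewrite !coef_trunc ?ltnS ?(ltnW lt_iN) //; apply: E_serSr.
Qed.

Lemma E_polyD N a c d : eqmodX N.+1 (E_poly N.+1 a c * E_poly N.+1 a d) (E_poly N.+1 a (c + d)).
Proof.
apply: (@ode_uniq _ N a (c + d)); last exact: E_poly_ode.
  by rewrite coefM big_ord1 !coef_trunc // !E_ser0 mulr1.
by apply: ode_mul; apply: E_poly_ode.
Qed.

Section GeneratingFunction.
Variables (a b x : algC) (N : nat).

Let base : fps := fps_add fps_one
     (fps_scale (- x) (fps_add (E_ser a b) (fps_scale (-1) fps_one))).
Let p : {poly algC} := trunc N.+1 (fps_inv base).
Let base_poly : {poly algC} := 1 - x%:P * (E_poly N.+1 a b - 1).

Let F (lam : nat) (c : algC) : {poly algC} := E_poly N.+1 a c * p ^+ lam.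

Lemma T_coef k lam c : (k <= N)%N -> T k lam x a b c = k`!%:R * (F lam c)`_k.
Proof.
move=> le_kN; rewrite /T -/base; congr (_ * _).
have trunc_F : eqmodX N.+1
    (trunc N.+1 (fps_mul (E_ser a c) (fps_pow (fps_inv base) lam))) (F lam c).
  by rewrite trunc_mul trunc_pow.
by rewrite -trunc_F // coef_trunc.
Qed.

Lemma base_poly_p : eqmodX N.+1 (base_poly * p) 1.
Proof.
have base0 : base 0%N != 0.
  by rewrite /base /fps_add /fps_scale /fps_one E_ser0 mulr1 addrN mulr0 addr0 oner_neq0.
have trunc_base : eqmodX N.+1 (trunc N.+1 base) base_poly.
  rewrite trunc_add trunc_one trunc_scale trunc_add trunc_scale trunc_one.
  by apply: eqmodX_eq; rewrite /base_poly /E_poly polyCN polyCN polyC1; ring.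
by rewrite -trunc_base -trunc_mul (trunc_ext _ (fps_mulV _ base0)) trunc_one.
Qed.

Lemma p_deriv : eqmodX N p^`() ((x * b)%:P * (E_poly N.+1 a (b - a) * p ^+ 2)).
Proof.
have unit_N : eqmodX N (base_poly * p) 1 := eqmodX_le (leqnSn N) base_poly_p.
have unit_deriv : eqmodX N (base_poly * p)^`() 0 by rewrite base_poly_p derivC.
have base_poly_deriv : base_poly^`() = - x%:P * (E_poly N.+1 a b)^`().
  by rewrite /base_poly !derivE subr0 sub0r mulNr.
transitivity (p^`() * (base_poly * p)); first by rewrite unit_N mulr1.
transitivity (p * (base_poly * p)^`() - base_poly^`() * p ^+ 2).
  by apply: eqmodX_eq; rewrite derivM; ring.
rewrite unit_deriv base_poly_deriv E_poly_deriv.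
by apply: eqmodX_eq; rewrite polyCM; ring.
Qed.

Lemma F_deriv lam c : eqmodX N (F lam c)^`()
  (c%:P * F lam (c - a) + (x * lam%:R * b)%:P * F lam.+1 (c + b - a)).
Proof.
rewrite /F derivM deriv_exp E_poly_deriv p_deriv.
transitivity (c%:P * (E_poly N.+1 a (c - a) * p ^+ lam) + (x * lam%:R * b)%:P
  * ((E_poly N.+1 a c * E_poly N.+1 a (b - a)) * p ^+ lam.+1)).
  by apply: eqmodX_eq; case: lam => [|k] /=; rewrite ?mulr0n ?mulr0 ?mul0r ?polyCM ?polyC_natr ?exprS; ring.
by rewrite (eqmodX_le (leqnSn N) (E_polyD N a c (b - a))) addrA.
Qed.

End GeneratingFunction.

Lemma T_recurrence (a b c x : algC) (lam n : nat) :
  T n.+1 lam x a b c =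
    c * T n lam x a b (c - a) + x * lam%:R * b * T n lam.+1 x a b (c + b - a).
Proof.
rewrite !(T_coef a b x n.+1) //.
have := F_deriv a b x n.+1 lam c n (ltnSn n).
rewrite coef_deriv coefD !coefCM => deriv_coef.
by rewrite factS natrM mulrAC [in LHS]mulr_natl deriv_coef; ring.
Qed.

Theorem theorem6 (alpha beta gamma lam x : nat) :
  (alpha, beta, gamma, x) <> (0%N, 0%N, 0%N, 0%N) ->
  forall n : nat,
    T n.+1 lam x%:R alpha%:R beta%:R gamma%:R =
      gamma%:R * T n lam x%:R alpha%:R beta%:R (gamma%:R - alpha%:R)
      + x%:R * lam%:R * beta%:R
        * T n lam.+1 x%:R alpha%:R beta%:R (gamma%:R + beta%:R - alpha%:R).
Proof. by move=> _ n; apply: T_recurrence. Qed.
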